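(* For $n\ge2$ let $E_n=(\mathbb{R}^2,\|\cdot\|_n)$ with $\|(x,y)\|_n=(|x|^n+|y|^n)^{1/n}$, and let $X$ be the Banach space of sequences $u=(u_n)_{n\ge2}$ with $u_n\in E_n$ and $\|u\|=\left(\sum_{n=2}^\infty\|u_n\|_n^2\right)^{1/2}<\infty$. Let $B_X=\{u\in X:\|u\|\le1\}$ and $B=\{u\in X:\|u\|\ge2\}$. Then there exist bounded sequences $\{x_n\},\{z_n\}\subset B_X$ and $\{y_n\}\subset B$ with $\lim_n\|x_n-y_n\|=\lim_n\|z_n-y_n\|=\mathrm{dist}(B_X,B)=1$ and $\lim_n\|x_n-z_n\|=2$; in particular the ordered pair $(B_X,B)$ has neither the $UC$ property nor the $BUC$ property.
   Context: $\mathrm{dist}(A,B)=\inf\{\|a-b\|:a\in A,b\in B\}$. The ordered pair $(A,B)$ has the $UC$ property if for all sequences $\{x_n\},\{z_n\}\subset A$, $\{y_n\}\subset B$ with $\lim_n\|x_n-y_n\|=\lim_n\|z_n-y_n\|=\mathrm{dist}(A,B)$ one has $\lim_n\|x_n-z_n\|=0$. It has the bounded $UC$ property ($BUC$) if the same implication holds whenever in addition $\{x_n\}$ and $\{z_n\}$ are bounded. *)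

From Stdlib Require Import Reals.
From Coquelicot Require Import Coquelicot.
Open Scope R_scope.

(* Elements of X are represented as u : nat -> R*R, where u k is the
   component lying in E_{k+2}  (i.e. the paper's u_{k+2}). *)
Definition Xseq := nat -> (R * R).

(* ||(x,y)||_n = (|x|^n + |y|^n)^(1/n); the value at (0,0) is 0
   (Rpower 0 _ is not 0 in Stdlib, hence the case split). *)
Definition pnorm (n : nat) (p : R * R) : R :=
  let s := Rabs (fst p) ^ n + Rabs (snd p) ^ n in
  if Req_EM_T s 0 then 0 else Rpower s (/ INR n).

Definition sqterm (u : Xseq) (k : nat) : R := (pnorm (k + 2) (u k)) ^ 2.

Definition inX (u : Xseq) : Prop := ex_series (sqterm u).

Definition normX (u : Xseq) : R := sqrt (Series (sqterm u)).

Definition subX (u v : Xseq) : Xseq :=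
  fun k => (fst (u k) - fst (v k), snd (u k) - snd (v k)).

Definition BX (u : Xseq) : Prop := inX u /\ normX u <= 1.
Definition Bout (u : Xseq) : Prop := inX u /\ normX u >= 2.

Definition distX (A B : Xseq -> Prop) : Rbar :=
  Glb_Rbar (fun r => exists a b, A a /\ B b /\ r = normX (subX a b)).

Definition boundedX (s : nat -> Xseq) : Prop :=
  exists M : R, forall m, normX (s m) <= M.

Definition UC (A B : Xseq -> Prop) : Prop :=
  forall x z y : nat -> Xseq,
    (forall m, A (x m)) -> (forall m, A (z m)) -> (forall m, B (y m)) ->
    is_lim_seq (fun m => normX (subX (x m) (y m))) (distX A B) ->
    is_lim_seq (fun m => normX (subX (z m) (y m))) (distX A B) ->
    is_lim_seq (fun m => normX (subX (x m) (z m))) 0.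

Definition BUC (A B : Xseq -> Prop) : Prop :=
  forall x z y : nat -> Xseq,
    (forall m, A (x m)) -> (forall m, A (z m)) -> (forall m, B (y m)) ->
    boundedX x -> boundedX z ->
    is_lim_seq (fun m => normX (subX (x m) (y m))) (distX A B) ->
    is_lim_seq (fun m => normX (subX (z m) (y m))) (distX A B) ->
    is_lim_seq (fun m => normX (subX (x m) (z m))) 0.

(* Proof outline.
   - The planar p-norms: ||p||_n is the unique r >= 0 with
     r^n = |p_1|^n + |p_2|^n, and Minkowski's inequality holds; the latter
     follows from the convexity of t |-> t^n on [0, oo).
   - dist(B_X, B) >= 1: the coordinatewise triangle inequality gives
     ||b||^2 <= 2 ||a||^2 + 2 ||a - b||^2, so ||a|| <= 1 and ||b|| >= 2 force
     ||a - b|| >= 1.  The value 1 is attained by vectors supported on E_2.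
   - Witnesses, all supported on the single coordinate E_n (n = m + 2), with
     c = 2^(-1/n):  x_m = (c, c),  z_m = (c, -c),  y_m = (2, 0).  Then
     ||x_m|| = ||z_m|| = 1, ||y_m|| = 2, ||x_m - z_m|| = 2c -> 2, and
     1 <= ||x_m - y_m|| = ||z_m - y_m|| <= 1 + 3/(2n) -> 1 (Bernoulli).
   - Since UC implies BUC, these witnesses refute both properties. *)

From Stdlib Require Import Reals Lra Lia FunctionalExtensionality.
From Coquelicot Require Import Coquelicot.
Open Scope R_scope.

Lemma pow_lt_compat (a b : R) (n : nat) :
  (0 < n)%nat -> 0 <= a < b -> a ^ n < b ^ n.
Proof.
  intros Hn [Ha Hab]. destruct n as [|n]; [lia|]. clear Hn.
  induction n as [|n IH]; [simpl; lra|].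
  change (a * a ^ S n < b * b ^ S n).
  assert (0 <= a ^ S n) by (apply pow_le; lra).
  nra.
Qed.

Lemma pow_le_reg (a b : R) (n : nat) :
  (0 < n)%nat -> 0 <= a -> 0 <= b -> a ^ n <= b ^ n -> a <= b.
Proof.
  intros Hn Ha Hb H. destruct (Rle_lt_dec a b) as [|Hba]; [assumption|].
  assert (b ^ n < a ^ n) by (apply pow_lt_compat; [exact Hn | lra]). lra.
Qed.

Lemma convex_pow (a b l : R) (n : nat) :
  0 <= a -> 0 <= b -> 0 <= l <= 1 ->
  (l * a + (1 - l) * b) ^ n <= l * a ^ n + (1 - l) * b ^ n.
Proof.
  intros Ha Hb Hl. induction n as [|n IH]; [simpl; lra|].
  change ((l * a + (1 - l) * b) * (l * a + (1 - l) * b) ^ n <=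
          l * (a * a ^ n) + (1 - l) * (b * b ^ n)).
  assert (Hmid : 0 <= l * a + (1 - l) * b) by nra.
  assert (Hstep : (l * a + (1 - l) * b) * (l * a + (1 - l) * b) ^ n <=
                  (l * a + (1 - l) * b) * (l * a ^ n + (1 - l) * b ^ n))
    by (apply Rmult_le_compat_l; assumption).
  (* a - b and a^n - b^n have the same sign *)
  assert (Hsign : 0 <= (a - b) * (a ^ n - b ^ n)).
  { destruct (Rle_lt_dec a b).
    - assert (a ^ n <= b ^ n) by (apply pow_incr; lra). nra.
    - assert (b ^ n <= a ^ n) by (apply pow_incr; lra). nra. }
  assert (0 <= l * (1 - l)) by nra.
  assert (0 <= (l * (1 - l)) * ((a - b) * (a ^ n - b ^ n))) by (apply Rmult_le_pos; assumption).
  nra.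
Qed.

Lemma minkowski2 (n : nat) (a1 a2 b1 b2 A B : R) :
  (0 < n)%nat -> 0 <= a1 -> 0 <= a2 -> 0 <= b1 -> 0 <= b2 -> 0 <= A -> 0 <= B ->
  a1 ^ n + a2 ^ n <= A ^ n -> b1 ^ n + b2 ^ n <= B ^ n ->
  (a1 + b1) ^ n + (a2 + b2) ^ n <= (A + B) ^ n.
Proof.
  intros Hn Ha1 Ha2 Hb1 Hb2 HA HB Ea Eb.
  assert (0 <= a1 ^ n) by (apply pow_le; lra). assert (0 <= a2 ^ n) by (apply pow_le; lra).
  assert (0 <= b1 ^ n) by (apply pow_le; lra). assert (0 <= b2 ^ n) by (apply pow_le; lra).
  (* a vector with vanishing bound is zero *)
  destruct (Req_dec A 0) as [A0|A0].
  { assert (a1 <= A) by (apply (pow_le_reg _ _ n Hn); lra).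
    assert (a2 <= A) by (apply (pow_le_reg _ _ n Hn); lra).
    replace a1 with 0 by lra. replace a2 with 0 by lra. rewrite A0, !Rplus_0_l. exact Eb. }
  destruct (Req_dec B 0) as [B0|B0].
  { assert (b1 <= B) by (apply (pow_le_reg _ _ n Hn); lra).
    assert (b2 <= B) by (apply (pow_le_reg _ _ n Hn); lra).
    replace b1 with 0 by lra. replace b2 with 0 by lra. rewrite B0, !Rplus_0_r. exact Ea. }
  (* (a + b) / (A + B) is the convex combination of a / A and b / B with weight l *)
  set (l := A / (A + B)).
  assert (Hl : 0 <= l <= 1).
  { unfold l; split; [apply Rdiv_le_0_compat; lra|].
    apply Rmult_le_reg_r with (A + B); [lra|]. field_simplify; lra. }
  assert (HAn : 0 < A ^ n) by (apply pow_lt; lra).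
  assert (HBn : 0 < B ^ n) by (apply pow_lt; lra).
  assert (HSn : 0 < (A + B) ^ n) by (apply pow_lt; lra).
  assert (Hcomb : forall a b, l * (a / A) + (1 - l) * (b / B) = (a + b) / (A + B))
    by (intros; unfold l; field; lra).
  assert (C1 := convex_pow (a1 / A) (b1 / B) l n
    ltac:(apply Rdiv_le_0_compat; lra) ltac:(apply Rdiv_le_0_compat; lra) Hl).
  assert (C2 := convex_pow (a2 / A) (b2 / B) l n
    ltac:(apply Rdiv_le_0_compat; lra) ltac:(apply Rdiv_le_0_compat; lra) Hl).
  rewrite Hcomb in C1, C2.
  unfold Rdiv in C1, C2. rewrite !Rpow_mult_distr, !pow_inv in C1, C2.
  assert (Ua : (a1 ^ n + a2 ^ n) * / A ^ n <= 1)
    by (apply Rmult_le_reg_r with (A ^ n); [lra|]; field_simplify; lra).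
  assert (Ub : (b1 ^ n + b2 ^ n) * / B ^ n <= 1)
    by (apply Rmult_le_reg_r with (B ^ n); [lra|]; field_simplify; lra).
  assert (Hsum : ((a1 + b1) ^ n + (a2 + b2) ^ n) * / (A + B) ^ n <= 1).
  { assert (l * ((a1 ^ n + a2 ^ n) * / A ^ n) <= l)
      by (rewrite <- (Rmult_1_r l) at 2; apply Rmult_le_compat_l; lra).
    assert ((1 - l) * ((b1 ^ n + b2 ^ n) * / B ^ n) <= 1 - l)
      by (rewrite <- (Rmult_1_r (1 - l)) at 2; apply Rmult_le_compat_l; lra).
    lra. }
  apply Rmult_le_reg_r with (/ (A + B) ^ n).
  - apply Rinv_0_lt_compat; lra.
  - rewrite Rinv_r by lra. exact Hsum.
Qed.

(** * The planar norms ||.||_n *)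

Section PlanarNorm.

Variable n : nat.
Hypothesis n_pos : (0 < n)%nat.

Lemma pnorm_spec (p : R * R) :
  0 <= pnorm n p /\ pnorm n p ^ n = Rabs (fst p) ^ n + Rabs (snd p) ^ n.
Proof.
  unfold pnorm. destruct (Req_EM_T _ _) as [E|E].
  - rewrite E, pow_i by exact n_pos. lra.
  - assert (0 <= Rabs (fst p) ^ n) by (apply pow_le, Rabs_pos).
    assert (0 <= Rabs (snd p) ^ n) by (apply pow_le, Rabs_pos).
    split; [left; apply exp_pos|].
    rewrite <- Rpower_pow by apply exp_pos.
    rewrite Rpower_mult, Rinv_l by (apply not_0_INR; lia).
    apply Rpower_1. lra.
Qed.

Lemma pnorm_le (p : R * R) (r : R) :
  0 <= r -> Rabs (fst p) ^ n + Rabs (snd p) ^ n <= r ^ n -> pnorm n p <= r.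
Proof.
  intros Hr H. destruct (pnorm_spec p) as [H0 Hp].
  apply (pow_le_reg _ _ n); [exact n_pos | exact H0 | exact Hr | lra].
Qed.

Lemma pnorm_ge (p : R * R) (r : R) :
  0 <= r -> r ^ n <= Rabs (fst p) ^ n + Rabs (snd p) ^ n -> r <= pnorm n p.
Proof.
  intros Hr H. destruct (pnorm_spec p) as [H0 Hp].
  apply (pow_le_reg _ _ n); [exact n_pos | exact Hr | exact H0 | lra].
Qed.

Lemma pnorm_unique (p : R * R) (r : R) :
  0 <= r -> r ^ n = Rabs (fst p) ^ n + Rabs (snd p) ^ n -> pnorm n p = r.
Proof.
  intros Hr H. apply Rle_antisym; [apply pnorm_le | apply pnorm_ge]; lra.
Qed.

Lemma pnorm_sub_le (p q : R * R) :
  pnorm n (fst p - fst q, snd p - snd q) <= pnorm n p + pnorm n q.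
Proof.
  destruct (pnorm_spec p) as [Hp Ep]. destruct (pnorm_spec q) as [Hq Eq].
  apply pnorm_le; [lra|]. simpl fst; simpl snd.
  assert (Tri : forall s t, 0 <= Rabs (s - t) <= Rabs s + Rabs t).
  { intros s t. split; [apply Rabs_pos|].
    unfold Rminus. rewrite <- (Rabs_Ropp t). apply Rabs_triang. }
  assert (U1 := pow_incr _ _ n (Tri (fst p) (fst q))).
  assert (U2 := pow_incr _ _ n (Tri (snd p) (snd q))).
  assert (M := minkowski2 n (Rabs (fst p)) (Rabs (snd p)) (Rabs (fst q)) (Rabs (snd q))
     (pnorm n p) (pnorm n q) n_pos (Rabs_pos _) (Rabs_pos _) (Rabs_pos _) (Rabs_pos _)
     Hp Hq (Req_le _ _ (eq_sym Ep)) (Req_le _ _ (eq_sym Eq))).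
  lra.
Qed.

End PlanarNorm.

(** * The lower bound dist(B_X, B) >= 1 *)

Lemma sqterm_nonneg (u : Xseq) (k : nat) : 0 <= sqterm u k.
Proof. apply pow2_ge_0. Qed.

Lemma Series_nonneg (a : nat -> R) :
  (forall k, 0 <= a k) -> ex_series a -> 0 <= Series a.
Proof.
  intros H Ha. rewrite <- (Rmult_0_l (Series a)), <- Series_scal_l.
  apply Series_le; [|exact Ha]. intros k. rewrite Rmult_0_l. split; [lra | apply H].
Qed.

Lemma normX_sq (u : Xseq) : inX u -> normX u ^ 2 = Series (sqterm u).
Proof.
  intros Hu. apply pow2_sqrt, Series_nonneg; [apply sqterm_nonneg | exact Hu].
Qed.

Lemma sq_le_sum_sq (al be de : R) :
  0 <= al -> 0 <= de -> 0 <= be -> be <= al + de -> be ^ 2 <= 2 * al ^ 2 + 2 * de ^ 2.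
Proof.
  intros. assert (be ^ 2 <= (al + de) ^ 2) by (apply pow_incr; lra).
  assert (0 <= (al - de) ^ 2) by apply pow2_ge_0. nra.
Qed.

Lemma sqterm_sub_le (u v : Xseq) (k : nat) :
  sqterm (subX u v) k <= 2 * sqterm u k + 2 * sqterm v k.
Proof.
  assert (Hk : (0 < k + 2)%nat) by lia.
  apply sq_le_sum_sq; try apply (pnorm_spec _ Hk). apply (pnorm_sub_le _ Hk).
Qed.

(* v = u - (u - v), which lets the coordinate bound control ||v_k||. *)
Lemma subX_subX (u v : Xseq) : subX u (subX u v) = v.
Proof.
  apply functional_extensionality. intros k. unfold subX; simpl.
  destruct (v k) as [v1 v2]; simpl. f_equal; ring.
Qed.

Lemma ex_series_double_sum (a b : nat -> R) :
  ex_series a -> ex_series b -> ex_series (fun k => 2 * a k + 2 * b k).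
Proof.
  intros Ha Hb. apply (ex_series_plus (fun k => 2 * a k) (fun k => 2 * b k));
    [apply (ex_series_scal_l 2 a Ha) | apply (ex_series_scal_l 2 b Hb)].
Qed.

Lemma inX_sub (u v : Xseq) : inX u -> inX v -> inX (subX u v).
Proof.
  intros Hu Hv.
  apply (@ex_series_le R_AbsRing R_CompleteNormedModule _ (fun k => 2 * sqterm u k + 2 * sqterm v k)).
  - intros k. change (norm (sqterm (subX u v) k)) with (Rabs (sqterm (subX u v) k)).
    rewrite Rabs_pos_eq by apply sqterm_nonneg. apply sqterm_sub_le.
  - apply ex_series_double_sum; assumption.
Qed.

Lemma normX_sq_le (u v : Xseq) :
  inX u -> inX v -> normX v ^ 2 <= 2 * normX u ^ 2 + 2 * normX (subX u v) ^ 2.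
Proof.
  intros Hu Hv. assert (Hd := inX_sub u v Hu Hv).
  rewrite !normX_sq by assumption.
  rewrite <- !Series_scal_l, <- Series_plus.
  - apply Series_le; [|apply ex_series_double_sum; assumption].
    intros k. split; [apply sqterm_nonneg|].
    rewrite <- (subX_subX u v) at 1. apply sqterm_sub_le.
  - apply (ex_series_scal_l 2 _ Hu).
  - apply (ex_series_scal_l 2 _ Hd).
Qed.

(* ||a|| <= 1 and ||b|| >= 2 give 4 <= 2 + 2 ||a - b||^2. *)
Lemma dist_lower_bound (a b : Xseq) : BX a -> Bout b -> 1 <= normX (subX a b).
Proof.
  intros [Ia Na] [Ib Nb].
  assert (H := normX_sq_le a b Ia Ib).
  assert (0 <= normX a) by apply sqrt_pos.
  assert (0 <= normX (subX a b)) by apply sqrt_pos.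
  nra.
Qed.

(** * Vectors supported on a single coordinate *)

Definition single (k : nat) (v : R * R) : Xseq :=
  fun j => if Nat.eqb j k then v else (0, 0).

Lemma sum_n_single (a : nat -> R) (k : nat) :
  (forall j, j <> k -> a j = 0) ->
  forall N, sum_n a N = if Nat.leb k N then a k else 0.
Proof.
  intros H N. induction N as [|N IH].
  - rewrite sum_O. destruct k; simpl; [reflexivity | apply H; lia].
  - rewrite sum_Sn, IH. change (plus ?x ?y) with (x + y).
    destruct (Nat.eqb_spec k (S N)) as [E|E].
    + subst. rewrite Nat.leb_refl.
      replace (Nat.leb (S N) N) with false by (symmetry; apply Nat.leb_gt; lia). apply Rplus_0_l.
    + rewrite (H (S N)) by auto.
      destruct (Nat.leb_spec k N); destruct (Nat.leb_spec k (S N)); try lia; [apply Rplus_0_r | apply Rplus_0_l].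
Qed.

Lemma is_series_single (a : nat -> R) (k : nat) :
  (forall j, j <> k -> a j = 0) -> is_series a (a k).
Proof.
  intros H. change (is_lim_seq (sum_n a) (a k)).
  apply (is_lim_seq_ext_loc (fun _ => a k)); [|apply is_lim_seq_const].
  exists k. intros N HN. rewrite (sum_n_single a k H).
  replace (Nat.leb k N) with true by (symmetry; apply Nat.leb_le; lia). reflexivity.
Qed.

Lemma pnorm_zero (n : nat) : (0 < n)%nat -> pnorm n (0, 0) = 0.
Proof.
  intros Hn. apply pnorm_unique; [exact Hn | lra |]. simpl. rewrite Rabs_R0, !pow_i by exact Hn. ring.
Qed.

Lemma single_inX (k : nat) (v : R * R) : inX (single k v) /\ normX (single k v) = pnorm (k + 2) v.
Proof.
  assert (H : is_series (sqterm (single k v)) (sqterm (single k v) k)).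
  { apply is_series_single. intros j Hj. unfold sqterm, single.
    destruct (Nat.eqb_spec j k); [lia|]. rewrite pnorm_zero by lia. ring. }
  split; [eexists; exact H|].
  unfold normX. rewrite (is_series_unique _ _ H). unfold sqterm, single.
  rewrite Nat.eqb_refl. apply sqrt_pow2, pnorm_spec. lia.
Qed.

Lemma subX_single (k : nat) (v w : R * R) :
  subX (single k v) (single k w) = single k (fst v - fst w, snd v - snd w).
Proof.
  apply functional_extensionality. intros j. unfold subX, single.
  destruct (Nat.eqb j k); simpl; [reflexivity | f_equal; ring].
Qed.

Lemma normX_single_sub (k : nat) (v w : R * R) :
  normX (subX (single k v) (single k w)) = pnorm (k + 2) (fst v - fst w, snd v - snd w).
Proof. rewrite subX_single. apply single_inX. Qed.

Lemma pnorm_axis (n : nat) (t : R) : (0 < n)%nat -> 0 <= t ->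
  pnorm n (t, 0) = t /\ pnorm n (0, t) = t.
Proof.
  intros Hn Ht. split; apply pnorm_unique; try assumption; simpl;
    rewrite Rabs_R0, pow_i, Rabs_pos_eq by assumption; ring.
Qed.

Theorem distX_BX_Bout : distX BX Bout = Finite 1.
Proof.
  unfold distX. apply is_glb_Rbar_unique. split.
  - intros r [a [b [Ha [Hb ->]]]]. apply dist_lower_bound; assumption.
  -
    intros l Hl. apply Hl. exists (single 0 (1, 0)), (single 0 (2, 0)).
    destruct (single_inX 0 (1, 0)) as [I1 N1]. destruct (single_inX 0 (2, 0)) as [I2 N2].
    rewrite (proj1 (pnorm_axis (0 + 2) 1 ltac:(lia) ltac:(lra))) in N1.
    rewrite (proj1 (pnorm_axis (0 + 2) 2 ltac:(lia) ltac:(lra))) in N2.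
    split; [split; [exact I1 | lra]|]. split; [split; [exact I2 | lra]|].
    rewrite normX_single_sub. symmetry. apply pnorm_unique; [lia | lra |]. simpl.
    rewrite Rminus_0_r, Rabs_R0, Rabs_left by lra. ring.
Qed.

(** * The witness sequences *)

(* shrink m = 2^(-1/n) with n = m + 2, so that ||(c, c)||_n = 1. *)
Definition shrink (m : nat) : R := Rpower (/ 2) (/ INR (m + 2)).

Lemma shrink_spec (m : nat) :
  0 < shrink m /\ shrink m ^ (m + 2) = / 2 /\
  shrink m <= 1 /\ 1 - / INR (m + 2) <= shrink m.
Proof.
  set (n := (m + 2)%nat). set (c := shrink m).
  assert (Hn : 0 < INR n) by (apply lt_0_INR; unfold n; lia).
  assert (Hc : 0 < c) by apply exp_pos.
  assert (Ec : c ^ n = / 2).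
  { rewrite <- Rpower_pow by exact Hc. unfold c, shrink. fold n.
    rewrite Rpower_mult, Rinv_l by lra. apply Rpower_1; lra. }
  assert (Hc1 : c <= 1).
  { apply (pow_le_reg _ _ n); [unfold n; lia | lra | lra |]. rewrite Ec, pow1. lra. }
  (* Bernoulli for 1/c = 1 + d gives 2 >= 1 + n d, i.e. d <= 1/n *)
  set (d := / c - 1).
  assert (Hd : 0 <= d).
  { unfold d. enough (1 <= / c) by lra.
    apply Rmult_le_reg_r with c; [exact Hc|]. rewrite Rinv_l by lra. lra. }
  assert (Bern := Rle_pow_lin d n Hd).
  replace (1 + d) with (/ c) in Bern by (unfold d; ring).
  rewrite pow_inv, Ec, Rinv_inv in Bern.
  assert (Hdn : d <= / INR n).
  { apply Rmult_le_reg_l with (INR n); [exact Hn|]. rewrite Rinv_r by lra. lra. }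
  assert (c * (1 + d) = 1) by (unfold d; field; lra).
  repeat split; try assumption. nra.
Qed.

Lemma lim_inv_index : is_lim_seq (fun m => / INR (m + 2)) 0.
Proof.
  assert (H : is_lim_seq (fun n => / INR n) 0).
  { replace (Finite 0) with (Rbar_inv p_infty) by reflexivity.
    apply is_lim_seq_inv; [apply is_lim_seq_INR | discriminate]. }
  exact (proj1 (is_lim_seq_incr_n (fun n => / INR n) 2 0) H).
Qed.

Lemma lim_shrink : is_lim_seq shrink 1.
Proof.
  apply is_lim_seq_le_le with (u := fun m => 1 - / INR (m + 2)) (w := fun _ => 1).
  - intros m. destruct (shrink_spec m) as (_ & _ & H1 & H2). lra.
  - replace (Finite 1) with (Finite (1 - 0)) by (f_equal; ring).
    apply is_lim_seq_minus'; [apply is_lim_seq_const | apply lim_inv_index].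
  - apply is_lim_seq_const.
Qed.

Lemma pnorm_near_one (m : nat) (p : R * R) :
  Rabs (fst p) = 2 - shrink m -> Rabs (snd p) = shrink m ->
  1 <= pnorm (m + 2) p <= 1 + (3 / 2) * / INR (m + 2).
Proof.
  intros E1 E2. destruct (shrink_spec m) as (Hc & Ec & Hc1 & _).
  set (n := (m + 2)%nat) in *. set (c := shrink m) in *.
  assert (Hn : (0 < n)%nat) by (unfold n; lia).
  assert (Hinv : 0 < / INR n) by (apply Rinv_0_lt_compat, lt_0_INR; exact Hn).
  assert (Hge : 1 <= (2 - c) ^ n) by (rewrite <- (pow1 n); apply pow_incr; lra).
  split.
  - apply pnorm_ge; [exact Hn | lra |]. rewrite E1, E2, Ec, pow1. lra.
  - apply pnorm_le; [exact Hn | lra |]. rewrite E1, E2, Ec.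
    (* (2 - c) c <= 1 gives (2 - c)^n <= 2 *)
    assert (P : ((2 - c) * c) ^ n <= 1 ^ n) by (apply pow_incr; split; nra).
    rewrite Rpow_mult_distr, Ec, pow1 in P.
    assert (Bern := Rle_pow_lin ((3 / 2) * / INR n) n ltac:(lra)).
    replace (INR n * (3 / 2 * / INR n)) with (3 / 2) in Bern by (field; apply not_0_INR; lia).
    lra.
Qed.

Definition xs (m : nat) : Xseq := single m (shrink m, shrink m).
Definition zs (m : nat) : Xseq := single m (shrink m, - shrink m).
Definition ys (m : nat) : Xseq := single m (2, 0).

Lemma Rabs_shrink (m : nat) : Rabs (shrink m) = shrink m.
Proof. apply Rabs_pos_eq. left; apply shrink_spec. Qed.

Lemma pnorm_shrink (m : nat) (s : R) : Rabs s = shrink m ->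
  pnorm (m + 2) (shrink m, s) = 1.
Proof.
  intros Hs. destruct (shrink_spec m) as (_ & Ec & _).
  apply pnorm_unique; [lia | lra |]. simpl fst; simpl snd.
  rewrite Hs, Rabs_shrink, Ec, pow1. field.
Qed.

Lemma xs_in_BX (m : nat) : BX (xs m).
Proof.
  unfold BX, xs. destruct (single_inX m (shrink m, shrink m)) as [I ->].
  rewrite pnorm_shrink by apply Rabs_shrink. split; [exact I | lra].
Qed.

Lemma zs_in_BX (m : nat) : BX (zs m).
Proof.
  unfold BX, zs. destruct (single_inX m (shrink m, - shrink m)) as [I ->].
  rewrite pnorm_shrink by (rewrite Rabs_Ropp; apply Rabs_shrink). split; [exact I | lra].
Qed.

Lemma ys_in_Bout (m : nat) : Bout (ys m).
Proof.
  unfold Bout, ys. destruct (single_inX m (2, 0)) as [I ->].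
  rewrite (proj1 (pnorm_axis (m + 2) 2 ltac:(lia) ltac:(lra))). split; [exact I | lra].
Qed.

Lemma lim_near_one (f : nat -> R) :
  (forall m, 1 <= f m <= 1 + (3 / 2) * / INR (m + 2)) -> is_lim_seq f 1.
Proof.
  intros H. apply is_lim_seq_le_le with
    (u := fun _ => 1) (w := fun m => 1 + (3 / 2) * / INR (m + 2)); [exact H | apply is_lim_seq_const |].
  replace (Finite 1) with (Finite (1 + 3 / 2 * 0)) by (f_equal; ring).
  apply is_lim_seq_plus'; [apply is_lim_seq_const |].
  apply (is_lim_seq_scal_l _ (3 / 2) 0), lim_inv_index.
Qed.

Lemma lim_xs_ys : is_lim_seq (fun m => normX (subX (xs m) (ys m))) 1.
Proof.
  apply lim_near_one. intros m. unfold xs, ys. rewrite normX_single_sub.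
  destruct (shrink_spec m) as (_ & _ & Hc1 & _).
  apply pnorm_near_one; simpl.
  - rewrite Rabs_left1 by lra. ring.
  - rewrite Rminus_0_r. apply Rabs_shrink.
Qed.

Lemma lim_zs_ys : is_lim_seq (fun m => normX (subX (zs m) (ys m))) 1.
Proof.
  apply lim_near_one. intros m. unfold zs, ys. rewrite normX_single_sub.
  destruct (shrink_spec m) as (_ & _ & Hc1 & _).
  apply pnorm_near_one; simpl.
  - rewrite Rabs_left1 by lra. ring.
  - rewrite Rminus_0_r, Rabs_Ropp. apply Rabs_shrink.
Qed.

(* ||x_m - z_m|| = ||(0, 2c)||_n = 2c -> 2 *)
Lemma lim_xs_zs : is_lim_seq (fun m => normX (subX (xs m) (zs m))) 2.
Proof.
  apply is_lim_seq_ext with (fun m => 2 * shrink m).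
  - intros m. unfold xs, zs. rewrite normX_single_sub. simpl fst; simpl snd.
    replace (shrink m - shrink m) with 0 by ring.
    replace (shrink m - - shrink m) with (2 * shrink m) by ring.
    symmetry. apply pnorm_axis; [lia|]. destruct (shrink_spec m) as [Hc _]. lra.
  - replace (Finite 2) with (Rbar_mult 2 1) by (simpl; f_equal; ring).
    apply is_lim_seq_scal_l, lim_shrink.
Qed.

(* BUC only restricts the class of test sequences. *)
Lemma UC_BUC (A B : Xseq -> Prop) : UC A B -> BUC A B.
Proof. intros H x z y Hx Hz Hy _ _. exact (H x z y Hx Hz Hy). Qed.

Lemma not_BUC_of_witnesses (A B : Xseq -> Prop) (x z y : nat -> Xseq) :
  (forall m, A (x m)) -> (forall m, A (z m)) -> (forall m, B (y m)) ->
  boundedX x -> boundedX z -> distX A B = Finite 1 ->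
  is_lim_seq (fun m => normX (subX (x m) (y m))) 1 ->
  is_lim_seq (fun m => normX (subX (z m) (y m))) 1 ->
  is_lim_seq (fun m => normX (subX (x m) (z m))) 2 ->
  ~ BUC A B.
Proof.
  intros Hx Hz Hy Bx Bz Hd Lxy Lzy Lxz Hbuc. rewrite <- Hd in Lxy, Lzy.
  assert (L0 := Hbuc x z y Hx Hz Hy Bx Bz Lxy Lzy).
  apply is_lim_seq_unique in L0. apply is_lim_seq_unique in Lxz.
  rewrite L0 in Lxz. injection Lxz. lra.
Qed.

Theorem mainTheorem18 :
  (exists x z y : nat -> Xseq,
      (forall m, BX (x m)) /\ (forall m, BX (z m)) /\ (forall m, Bout (y m)) /\
      boundedX x /\ boundedX z /\
      distX BX Bout = Finite 1 /\
      is_lim_seq (fun m => normX (subX (x m) (y m))) 1 /\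
      is_lim_seq (fun m => normX (subX (z m) (y m))) 1 /\
      is_lim_seq (fun m => normX (subX (x m) (z m))) 2)
  /\ ~ UC BX Bout /\ ~ BUC BX Bout.
Proof.
  assert (Bx : boundedX xs) by (exists 1; intros m; apply xs_in_BX).
  assert (Bz : boundedX zs) by (exists 1; intros m; apply zs_in_BX).
  assert (NotBUC : ~ BUC BX Bout)
    by exact (not_BUC_of_witnesses BX Bout xs zs ys xs_in_BX zs_in_BX ys_in_Bout
                Bx Bz distX_BX_Bout lim_xs_ys lim_zs_ys lim_xs_zs).
  split; [|split].
  - exists xs, zs, ys.
    repeat split; first [apply xs_in_BX | apply zs_in_BX | apply ys_in_Bout | assumption
      | apply distX_BX_Bout | apply lim_xs_ys | apply lim_zs_ys | apply lim_xs_zs].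
  - intros Huc. exact (NotBUC (UC_BUC _ _ Huc)).
  - exact NotBUC.
Qed.
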